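(* Let $A$ be a non-empty set and let $M$ be an equidecomposable magma. Then $\mathbb{M}_A\times M\cong \mathbb{M}_{(A\times M)\cup(\mathbb{M}_A\times \mathrm{Indec}(M))}$.
   Context: A magma is a set with a binary operation $+$; it is equidecomposable if $x+y=x'+y'$ implies $x=x'$ and $y=y'$. $\mathbb{M}_X$ denotes the free magma on a set $X$ (non-associative words over $X$ with $x+y=(x,y)$). The direct product $\mathbb{M}_A\times M$ carries the componentwise operation. $\mathrm{Indec}(M)=M\setminus(M+M)$ is the set of indecomposable elements of $M$ (those not of the form $x+y$). *)

Record magma := Magma { carrier :> Type; mop : carrier -> carrier -> carrier }.
Arguments mop {m} _ _.

Definition equidecomposable (M : magma) : Prop :=
  forall x y x' y' : M, mop x y = mop x' y' -> x = x' /\ y = y'.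

Definition indec (M : magma) (m : M) : Prop :=
  ~ exists x y : M, mop x y = m.

Inductive fmag (X : Type) : Type :=
| fgen : X -> fmag X
| fnode : fmag X -> fmag X -> fmag X.
Arguments fgen {X} _.
Arguments fnode {X} _ _.

Definition free_magma (X : Type) : magma := Magma (fmag X) (@fnode X).

Definition prod_magma (M N : magma) : magma :=
  Magma (M * N)%type (fun p q => (mop (fst p) (fst q), mop (snd p) (snd q))).

Definition magma_iso (M N : magma) : Prop :=
  exists (f : M -> N) (g : N -> M),
    (forall x y : M, f (mop x y) = mop (f x) (f y)) /\
    (forall x, g (f x) = x) /\ (forall y, f (g y) = y).

(** The generating set (A x M) ∪ (M_A x Indec(M)), as a subset of M_A x M,
    with A identified with the generators of M_A. *)
Definition gen_set (A : Type) (M : magma) : Type :=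
  { p : (fmag A * M)%type |
      (exists a : A, fst p = fgen a) \/ indec M (snd p) }.

From Stdlib Require Import ClassicalEpsilon ProofIrrelevance.

(* Every pair (w, m) is encoded as a word over the generating set: a
   generator (a, m) stays a generator; for (u + v, m) we either split m = x + y,
   uniquely by equidecomposability, and encode (u, x) and (v, y), or m is
   indecomposable and (u + v, m) is itself a generator.  Decoding is the
   homomorphism of free magmas extending the inclusion of the generators; the
   uniqueness of splittings makes encoding a homomorphism, and the two maps
   are mutually inverse by induction on words. *)

Fixpoint free_ext {X : Type} {N : magma} (f : X -> N) (t : fmag X) : N :=
  match t with
  | fgen x => f x
  | fnode s u => mop (free_ext f s) (free_ext f u)
  end.

Definition decompose {M : magma} (m : M) :
  {p : (M * M)%type | mop (fst p) (snd p) = m} + {indec M m}.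
Proof.
  destruct (excluded_middle_informative (exists p : (M * M)%type, mop (fst p) (snd p) = m))
    as [Hd | Hi].
  - exact (inleft (constructive_indefinite_description _ Hd)).
  - right; intros [x [y Hxy]]; apply Hi; exists (x, y); exact Hxy.
Defined.

Section FreeProduct.

Context {A : Type} {M : magma}.

Fixpoint encode (w : fmag A) (m : M) : fmag (gen_set A M) :=
  match w with
  | fgen a => fgen (exist _ (fgen a, m) (or_introl (ex_intro _ a eq_refl)))
  | fnode u v =>
    match decompose m with
    | inleft p => fnode (encode u (fst (proj1_sig p))) (encode v (snd (proj1_sig p)))
    | inright Hi => fgen (exist _ (fnode u v, m) (or_intror Hi))
    end
  end.

Definition decode : fmag (gen_set A M) -> prod_magma (free_magma A) M :=
  @free_ext _ (prod_magma (free_magma A) M) (@proj1_sig _ _).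

Lemma decode_node (s t : fmag (gen_set A M)) : decode (fnode s t) = mop (decode s) (decode t).
Proof. reflexivity. Qed.

Lemma decode_encode (w : fmag A) (m : M) : decode (encode w m) = (w, m).
Proof.
  revert m; induction w as [a | u IHu v IHv]; intros m; [reflexivity |].
  simpl; destruct (decompose m) as [[[x y] Hxy] | Hi]; [| reflexivity].
  simpl in *; rewrite decode_node, IHu, IHv, <- Hxy; reflexivity.
Qed.

Lemma encode_gen (p : gen_set A M) : encode (fst (proj1_sig p)) (snd (proj1_sig p)) = fgen p.
Proof.
  destruct p as [[[a | u v] m] Hp]; simpl.
  - f_equal; f_equal; apply proof_irrelevance.
  - destruct (decompose m) as [[[x y] Hxy] | Hi].
    + exfalso; destruct Hp as [[a Ha] | Hi]; [discriminate | apply Hi; now exists x, y].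
    + f_equal; f_equal; apply proof_irrelevance.
Qed.

Hypothesis equidec : equidecomposable M.

Lemma encode_node (u v : fmag A) (x y : M) :
  encode (fnode u v) (mop x y) = fnode (encode u x) (encode v y).
Proof.
  simpl; destruct (decompose (mop x y)) as [[[x' y'] Hxy] | Hi].
  - simpl in *; destruct (equidec _ _ _ _ Hxy) as [-> ->]; reflexivity.
  - exfalso; apply Hi; exists x, y; reflexivity.
Qed.

Lemma encode_decode (t : fmag (gen_set A M)) : encode (fst (decode t)) (snd (decode t)) = t.
Proof.
  induction t as [p | s IHs u IHu]; [apply encode_gen |].
  rewrite decode_node; cbn [mop prod_magma free_magma fst snd].
  rewrite encode_node, IHs, IHu; reflexivity.
Qed.

End FreeProduct.

Theorem theorem5p12 (A : Type) (M : magma) :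
  inhabited A -> equidecomposable M ->
  magma_iso (prod_magma (free_magma A) M) (free_magma (gen_set A M)).
Proof.
  intros _ equidec.
  exists (fun p => encode (fst p) (snd p)), decode.
  split; [| split].
  - intros [u x] [v y]; apply (encode_node equidec).
  - intros [w m]; apply decode_encode.
  - apply (encode_decode equidec).
Qed.
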